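(* Let $F=(f_1,\dots,f_q)^\top:\mathbb{R}^n\to\mathbb{R}^q$, let $Y\subseteq\mathbb{R}^n$ be a finite nonempty set, let $y\in\mathbb{R}^n$ and $\nu>0$. Let $f_{\min},f_{\max}\in\mathbb{R}^q$ satisfy $f_{\min}\le F(x)\le f_{\max}$ componentwise for all $x\in Y\cup\{y\}$, and let the reference point be $\rho=f_{\max}+s\mathbf{1}$ with $s\ge\max_{i=1,\dots,q}\big((f_{\max})_i-(f_{\min})_i\big)$ and $s>0$. If \[ F(y)\not> F(x)-\nu\mathbf{1}\qquad\text{for all } x\in Y, \] i.e. for every $x\in Y$ there is an index $\ell$ with $f_\ell(y)\le f_\ell(x)-\nu$, then \[ HI(F(Y\cup\{y\}))-HI(F(Y))\ge\nu^q . \]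
   Context: Vector order conventions for $u,v\in\mathbb{R}^q$: $u>v$ means $u_i>v_i$ for all $i$, and $u\not>v$ is its negation; $\le$ between vectors in the hypotheses means componentwise inequality. $\mathbf{1}$ denotes the all-ones vector in $\mathbb{R}^q$. For a set $Y\subseteq\mathbb{R}^n$, $F(Y)=\{F(x):x\in Y\}$. For a finite set $A\subset\mathbb{R}^q$ and a reference point $\rho\in\mathbb{R}^q$ with $a_i\le\rho_i$ for all $a\in A$ and all $i$, the hypervolume indicator is $HI(A)=\mathrm{vol}\big(\bigcup_{a\in A}[a,\rho]\big)$, where $[a,\rho]=\{w\in\mathbb{R}^q: a_i\le w_i\le\rho_i,\ i=1,\dots,q\}$ and $\mathrm{vol}$ is Lebesgue measure on $\mathbb{R}^q$. *)

From HB Require Import structures.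
From mathcomp Require Import all_boot all_order all_algebra.
From mathcomp Require Import all_classical all_reals all_analysis.
Set Implicit Arguments. Unset Strict Implicit. Unset Printing Implicit Defensive.
Import Order.TTheory GRing.Theory Num.Theory.
Local Open Scope ring_scope.
Local Open Scope classical_set_scope.

(* Vectors of R^q are row vectors 'rV[R]_q; coordinate i of u is u 0 i. *)

Definition vgt (R : realType) (q : nat) (u v : 'rV[R]_q) : Prop :=
  forall i : 'I_q, v 0 i < u 0 i.

(* Iterated Lebesgue integration over n real coordinates (the first
   coordinate is integrated outermost); this is exactly the unfolding of the
   iterated product measure lebesgue_measure \x ... \x lebesgue_measure. *)
Fixpoint iter_lebesgue_int (R : realType) (n : nat)
    (g : seq R -> \bar R) : \bar R :=
  match n with
  | 0 => g [::]
  | n'.+1 => (\int[@lebesgue_measure R]_x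
                 iter_lebesgue_int n' (fun s => g (x :: s)))%E
  end.

Definition lebesgue_vol (R : realType) (q : nat) (A : set 'rV[R]_q) : \bar R :=
  iter_lebesgue_int q
    (fun s => ((\1_A (\row_(i < q) nth 0 s i) : R))%:E).

Definition box (R : realType) (q : nat) (a rho : 'rV[R]_q) : set 'rV[R]_q :=
  [set w | forall i : 'I_q, a 0 i <= w 0 i <= rho 0 i].

Definition HI (R : realType) (q : nat) (rho : 'rV[R]_q) (A : seq 'rV[R]_q)
  : \bar R :=
  lebesgue_vol [set w | exists2 a, a \in A & box a rho w].

From HB Require Import structures.
From mathcomp Require Import all_boot all_order all_algebra.
From mathcomp Require Import all_classical all_reals all_analysis.
From mathcomp Require Import lra.
Import Order.TTheory GRing.Theory Num.Theory.
Local Open Scope ring_scope.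
Local Open Scope classical_set_scope.

(* The union of the boxes [F x, rho] for x in y :: Y contains the union U of
   those for x in Y and the half-open cube [F y, F y + nu) of volume nu^q.
   The cube fits in [F y, rho] because nu <= s, and it misses U because each
   F x with x in Y exceeds F y by nu in some coordinate.  Volume is monotone
   and superadditive on disjoint sets, and U is bounded, so the volume
   increases by at least nu^q. *)

Lemma ereal_supD_le (R : realType) (A B C : set (\bar R)) :
  A 0 -> B 0 -> (forall a, A a -> 0 <= a)%E -> (forall b, B b -> 0 <= b)%E ->
  (forall a b, A a -> B b -> a + b <= ereal_sup C)%E ->
  (ereal_sup A + ereal_sup B <= ereal_sup C)%E.
Proof.
move=> A0 B0 A_ge0 B_ge0 ABC; set c := ereal_sup C.
have [->|cNy] := eqVneq c +oo%E; first exact: leey.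
have cy : (c < +oo)%E by rewrite ltey.
have c_fin : c \is a fin_num.
  by rewrite ge0_fin_numE // -[0%E]adde0 ABC.
have A_fin a : A a -> a \is a fin_num.
  move=> Aa; rewrite ge0_fin_numE ?A_ge0 // (le_lt_trans _ cy) //.
  by rewrite -[a]adde0 ABC.
have supB_le a : A a -> (ereal_sup B <= c - a)%E.
  by move=> Aa; apply: ge_ereal_sup => b Bb; rewrite leeBrDl ?A_fin // ABC.
have supB_fin : ereal_sup B \is a fin_num.
  rewrite ge0_fin_numE; last exact: ereal_sup_ubound.
  by rewrite (le_lt_trans (supB_le 0 A0)) // sube0.
rewrite -leeBrDr //; apply: ge_ereal_sup => a Aa.
by rewrite leeBrDr // addeC -leeBrDr ?A_fin // supB_le.
Qed.

Section iterated_lebesgue_integral.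
Context {R : realType}.
Local Notation mu := (@lebesgue_measure R).
Local Open Scope ereal_scope.

(* Integrals of arbitrary nonnegative functions are suprema of integrals of
   simple functions below them, so no measurability is needed here. *)
Lemma ge0_le_integralT (f g : R -> \bar R) :
  (forall x, 0 <= f x) -> (forall x, f x <= g x) ->
  \int[mu]_x f x <= \int[mu]_x g x.
Proof.
move=> f_ge0 fg; have g_ge0 x : 0 <= g x by apply: le_trans (fg x).
rewrite !ge0_integralTE //; apply: ereal_sup_le => _ [h hf <-].
by exists h => // x; apply: le_trans (fg x).
Qed.

Lemma ge0_le_integralTD (f g : R -> \bar R) :
  (forall x, 0 <= f x) -> (forall x, 0 <= g x) ->
  \int[mu]_x f x + \int[mu]_x g x <= \int[mu]_x (f x + g x).
Proof.
move=> f_ge0 g_ge0; rewrite !ge0_integralTE // => [|x]; last exact: adde_ge0.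
apply: ereal_supD_le.
- by exists nnsfun0 => //; rewrite sintegral0.
- by exists nnsfun0 => //; rewrite sintegral0.
- by move=> _ [h _ <-]; exact: sintegral_ge0.
- by move=> _ [h _ <-]; exact: sintegral_ge0.
move=> _ _ [h1 h1f <-] [h2 h2g <-]; apply: ereal_sup_ubound.
exists (add_nnsfun h1 h2); last exact: sintegralD.
by move=> x /=; rewrite EFinD leeD.
Qed.

Lemma iter_lebesgue_int_ge0 n (g : seq R -> \bar R) :
  (forall t, 0 <= g t) -> 0 <= iter_lebesgue_int n g.
Proof.
elim: n g => [|n IH] g g_ge0 /=; first exact: g_ge0.
by apply: integral_ge0 => x _; apply: IH.
Qed.

Lemma le_iter_lebesgue_int n (g1 g2 : seq R -> \bar R) :
  (forall t, 0 <= g1 t) -> (forall t, g1 t <= g2 t) ->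
  iter_lebesgue_int n g1 <= iter_lebesgue_int n g2.
Proof.
elim: n g1 g2 => [|n IH] g1 g2 g1_ge0 g12 /=; first exact: g12.
apply: ge0_le_integralT => x; first exact: iter_lebesgue_int_ge0.
exact: IH.
Qed.

Lemma iter_lebesgue_intD_ge n (g1 g2 : seq R -> \bar R) :
  (forall t, 0 <= g1 t) -> (forall t, 0 <= g2 t) ->
  iter_lebesgue_int n g1 + iter_lebesgue_int n g2 <=
  iter_lebesgue_int n (fun t => g1 t + g2 t).
Proof.
elim: n g1 g2 => [|n IH] g1 g2 g1_ge0 g2_ge0 //=.
apply: le_trans (ge0_le_integralTD _ _ _ _) _ => [x|x|];
  [exact: iter_lebesgue_int_ge0 | exact: iter_lebesgue_int_ge0 |].
apply: ge0_le_integralT => x; last exact: IH.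
by rewrite adde_ge0 // iter_lebesgue_int_ge0.
Qed.

Lemma iter_lebesgue_int0 n : iter_lebesgue_int n (fun _ : seq R => 0) = 0.
Proof.
elim: n => [|n IH] //=.
by under eq_integral do rewrite IH; exact: integral0.
Qed.

Lemma iter_lebesgue_int_prod_indic n (a b : 'I_n -> R) :
  (forall i, (a i <= b i)%R) ->
  iter_lebesgue_int n
    (fun t => (\prod_(i < n) \1_`[a i, b i[ (nth 0%R t i))%:E)
  = (\prod_(i < n) (b i - a i))%:E.
Proof.
elim: n a b => [|n IH] a b ab /=; first by rewrite !big_ord0.
set c := (\prod_(i < n) (b (lift ord0 i) - a (lift ord0 i)))%R.
have c_ge0 : (0 <= c)%R by apply: prodr_ge0 => i _; rewrite subr_ge0.
have -> : (fun x => iter_lebesgue_int n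
    (fun t => (\prod_(i < n.+1) \1_`[a i, b i[ (nth 0%R (x :: t) i))%:E)) =
    (fun x => (c * \1_`[a ord0, b ord0[ x)%:E).
  apply/funext => x; under eq_fun do rewrite big_ord_recl /=.
  rewrite indicE; case: (x \in _); rewrite ?mulr1 ?mulr0.
    under eq_fun do rewrite mul1r.
    exact: (IH (fun i => a (lift ord0 i)) (fun i => b (lift ord0 i))).
  under eq_fun do rewrite mul0r; exact: iter_lebesgue_int0.
have := @integralZl_indic _ _ _ mu _ measurableT (fun=> `[a ord0, b ord0[) c.
move=> /= -> //; last by rewrite ltNge c_ge0.
rewrite integral_indic // setIT.
have := @lebesgue_measure_itv R (Interval (BLeft (a ord0)) (BLeft (b ord0))).
move=> /= ->; rewrite lte_fin big_ord_recl.
case: ltgtP (ab ord0) => // [_|->] _; first by rewrite -EFinD -EFinM mulrC.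
by rewrite mule0 subrr mul0r.
Qed.

End iterated_lebesgue_integral.

Section hypervolume.
Context {R : realType} {q : nat}.
Implicit Types (a b m p rho : 'rV[R]_q) (A B C : set 'rV[R]_q).

Definition half_open_box a b : set 'rV[R]_q :=
  [set w | forall i, a 0 i <= w 0 i < b 0 i].

Lemma indic_half_open_box a b w :
  \1_(half_open_box a b) w = \prod_(i < q) \1_`[a 0 i, b 0 i[ (w 0 i) :> R.
Proof.
rewrite indicE; have [wab|wNab] := pselect (half_open_box a b w).
  rewrite mem_set //; symmetry; apply: big1 => i _.
  by rewrite indicE mem_set //= in_itv /= wab.
have [i /negP wiN] : exists i, ~ (a 0 i <= w 0 i < b 0 i) by exact/existsNP.
rewrite memNset // (bigD1 i) //= indicE memNset ?mul0r //= in_itv /=.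
exact/negP.
Qed.

Lemma lebesgue_vol_half_open_box a b : (forall i, a 0 i <= b 0 i) ->
  lebesgue_vol (half_open_box a b) = (\prod_(i < q) (b 0 i - a 0 i))%:E.
Proof.
move=> ab; rewrite /lebesgue_vol.
under eq_fun do rewrite indic_half_open_box.
under eq_fun do under eq_bigr do rewrite mxE.
exact: (@iter_lebesgue_int_prod_indic R q (fun i => a 0 i) (fun i => b 0 i) ab).
Qed.

Lemma le_lebesgue_vol A B : A `<=` B -> (lebesgue_vol A <= lebesgue_vol B)%E.
Proof.
move=> AB; apply: le_iter_lebesgue_int => t; rewrite lee_fin !indicE //.
by rewrite ler_nat; case: (boolP (_ \in A)) => // /set_mem/AB/mem_set ->.
Qed.

Lemma lebesgue_vol_disjointU_le A B C : A `&` B = set0 -> A `|` B `<=` C ->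
  (lebesgue_vol A + lebesgue_vol B <= lebesgue_vol C)%E.
Proof.
move=> AB0 ABC; rewrite /lebesgue_vol.
apply: le_trans; first apply: iter_lebesgue_intD_ge.
- by move=> t; rewrite lee_fin.
- by move=> t; rewrite lee_fin.
apply: le_iter_lebesgue_int => t; first by rewrite adde_ge0 // lee_fin.
set w := \row_(i < q) _; rewrite -EFinD lee_fin !indicE -natrD ler_nat.
have [/set_mem Aw|_] := boolP (w \in A).
  rewrite (@memNset _ B) => [|Bw]; last by have : (A `&` B) w by []; rewrite AB0.
  by rewrite mem_set //; apply: ABC; left.
case: (boolP (w \in B)) => // /set_mem Bw.
by rewrite mem_set //; apply: ABC; right.
Qed.

Lemma HI_fin_num rho m (A : seq 'rV[R]_q) : (forall i, m 0 i <= rho 0 i) ->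
  (forall a, a \in A -> forall i, m 0 i <= a 0 i) -> HI rho A \is a fin_num.
Proof.
move=> m_rho mA; rewrite ge0_fin_numE; last first.
  by apply: iter_lebesgue_int_ge0 => t; rewrite lee_fin.
apply: (le_lt_trans (le_lebesgue_vol _ (half_open_box m (rho + const_mx 1)) _)).
  move=> w [a aA abox] i; have /andP[aw wr] := abox i; have := mA a aA i.
  by rewrite !mxE => ma; apply/andP; split; lra.
rewrite lebesgue_vol_half_open_box ?ltey // => i.
by rewrite !mxE; have := m_rho i; lra.
Qed.

Lemma HI_cons_ge rho p (A : seq 'rV[R]_q) nu : 0 < nu ->
  (forall i, p 0 i + nu <= rho 0 i) ->
  (forall a, a \in A -> exists l, p 0 l + nu <= a 0 l) ->
  (HI rho A + (nu ^+ q)%:E <= HI rho (p :: A))%E.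
Proof.
move=> nu_gt0 p_rho pA; set c := p + nu *: const_mx 1.
have cE i : c 0 i = p 0 i + nu by rewrite !mxE mulr1.
have <- : lebesgue_vol (half_open_box p c) = (nu ^+ q)%:E.
  rewrite lebesgue_vol_half_open_box => [|i]; last by rewrite cE lerDl ltW.
  by under eq_bigr do rewrite cE addrAC subrr add0r; rewrite prodr_const card_ord.
apply: lebesgue_vol_disjointU_le.
  apply/seteqP; split=> // w [[a aA abox] wpc]; have [l pal] := pA a aA.
  have /andP[aw _] := abox l; have /andP[_] := wpc l; rewrite cE; lra.
move=> w [[a aA abox]|wpc]; first by exists a => //; rewrite inE aA orbT.
exists p; first exact: mem_head.
move=> i; have /andP[pw] := wpc i; rewrite cE pw /=; have := p_rho i; lra.
Qed.

End hypervolume.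

Theorem proposition1 (R : realType) (n q : nat)
    (F : 'rV[R]_n -> 'rV[R]_q) (Y : seq 'rV[R]_n) (y : 'rV[R]_n) (nu : R)
    (fmin fmax : 'rV[R]_q) (s : R) :
  Y != [::] ->
  0 < nu ->
  (forall x, x \in y :: Y ->
     forall i : 'I_q, fmin 0 i <= F x 0 i /\ F x 0 i <= fmax 0 i) ->
  (forall i : 'I_q, fmax 0 i - fmin 0 i <= s) ->
  0 < s ->
  (forall x, x \in Y -> ~ vgt (F y) (F x - nu *: const_mx 1)) ->
  ((nu ^+ q)%:E <=
     HI (fmax + s *: const_mx 1)%R (map F (y :: Y))
     - HI (fmax + s *: const_mx 1)%R (map F Y))%E.
Proof.
move=> Y_neq0 nu_gt0 F_bnd s_bnd _ y_notdom.
set rho := fmax + s *: const_mx 1.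
have rhoE i : rho 0 i = fmax 0 i + s by rewrite !mxE mulr1.
have y_in : y \in y :: Y := mem_head _ _.
have Y_sub x : x \in Y -> x \in y :: Y := @mem_behead _ (y :: Y) x.
have y_dom x : x \in Y -> exists l, F y 0 l + nu <= F x 0 l.
  move=> /y_notdom /existsNP [l]; rewrite !mxE mulr1 => /negP.
  by rewrite -leNgt lerBrDr; exists l.
have nu_le_s : nu <= s.
  have x0Y : nth y Y 0 \in Y by rewrite mem_nth // lt0n size_eq0.
  have [l Fyx] := y_dom _ x0Y; have := s_bnd l.
  have [Fy _] := F_bnd y y_in l; have [_ Fx] := F_bnd _ (Y_sub _ x0Y) l.
  lra.
rewrite map_cons leeBrDl; last first.
  apply: (@HI_fin_num R q rho fmin) => [i|_ /mapP[x xY ->] i].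
    by rewrite rhoE; have [] := F_bnd y y_in i; lra.
  exact: (F_bnd x (Y_sub _ xY) i).1.
apply: (HI_cons_ge rho (F y) (map F Y) nu nu_gt0) => [i|_ /mapP[x xY ->]].
  by rewrite rhoE; have [_] := F_bnd y y_in i; lra.
exact: y_dom.
Qed.
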